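(* Let $f:\mathbb{R}^d\times\mathcal{X}\to\mathbb{R}$ be differentiable in $\theta$, where $\mathcal{X}$ is a subset of a Euclidean space with $\sup_{x\in\mathcal{X}}\Vert x\Vert\le D<\infty$. Assume (A1): there are $K_1,K_2>0$ with $\Vert\nabla f(\theta,x)-\nabla f(\hat\theta,\hat x)\Vert\le K_1\Vert\theta-\hat\theta\Vert+K_2\Vert x-\hat x\Vert(\Vert\theta\Vert+\Vert\hat\theta\Vert+1)$ for all $\theta,\hat\theta\in\mathbb{R}^d$, $x,\hat x\in\mathcal{X}$; and (A2): there is $\mu>0$ with $\langle\nabla f(\theta_1,x)-\nabla f(\theta_2,x),\theta_1-\theta_2\rangle\ge\mu\Vert\theta_1-\theta_2\Vert^2$ for all $\theta_1,\theta_2,x$. Let $\hat x_1,\dots,\hat x_n\in\mathcal{X}$, $b\in\{1,\dots,n\}$, let $\hat\theta_*$ be the minimizer of $\hat F(\theta,\hat X_n):=\frac1n\sum_{i=1}^nf(\theta,\hat x_i)$, and let $\hat V(\theta):=1+\Vert\theta-\hat\theta_*\Vert^2$. Let $\hat P$ be the transition kernel of $\hat\theta_k=\hat\theta_{k-1}-\frac{\eta}{b}\sum_{i\in\Omega_k}\nabla f(\hat\theta_{k-1},\hat x_i)$, with $(\Omega_k)$ i.i.d. uniformly random $b$-subsets of $\{1,\dots,n\}$. If $\eta<\min\left\{\frac1\mu,\frac{\mu}{K_1^2+64D^2K_2^2}\right\}$, then for all $\theta\in\mathbb{R}^d$, $$(\hat P\hat V)(\theta)\le(1-\eta\mu)\hat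 V(\theta)+2\eta\mu-\eta^2K_1^2-56\eta^2D^2K_2^2+64\eta^2D^2K_2^2\Vert\hat\theta_*\Vert^2.$$
   Context: $(\hat P\hat V)(\theta)=\mathbb{E}[\hat V(\hat\theta_1)\mid\hat\theta_0=\theta]$. *)

From HB Require Import structures.
From mathcomp Require Import all_boot all_order all_algebra.
From mathcomp Require Import all_classical all_reals all_analysis.
Set Implicit Arguments. Unset Strict Implicit. Unset Printing Implicit Defensive.
Import Order.TTheory GRing.Theory Num.Theory.
Import numFieldNormedType.Exports.
Local Open Scope ring_scope.

Definition dotv (R : realType) (d : nat) (u v : 'rV[R]_d) : R :=
  \sum_(i < d) u 0 i * v 0 i.

Definition enorm (R : realType) (d : nat) (u : 'rV[R]_d) : R :=
  Num.sqrt (dotv u u).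

Definition Fhat (R : realType) (d m n : nat) (f : 'rV[R]_d -> 'rV[R]_m -> R)
  (xs : 'I_n -> 'rV[R]_m) (theta : 'rV[R]_d) : R :=
  n%:R^-1 * \sum_(i < n) f theta (xs i).

Definition Vhat (R : realType) (d : nat) (thstar theta : 'rV[R]_d) : R :=
  1 + enorm (theta - thstar) ^+ 2.

(* (P V)(theta) = E[ V(theta - eta/b sum_{i in Omega} grad f(theta, x_i)) ],
   Omega uniformly distributed over the b-subsets of {1,..,n}
   (here indexed by 'I_n); the expectation is the uniform average. *)
Definition PV (R : realType) (d m n b : nat)
  (gradf : 'rV[R]_d -> 'rV[R]_m -> 'rV[R]_d) (xs : 'I_n -> 'rV[R]_m)
  (eta : R) (V : 'rV[R]_d -> R) (theta : 'rV[R]_d) : R :=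
  (\sum_(S : {set 'I_n} | #|S| == b)
      V (theta - (eta / b%:R) *: \sum_(i in S) gradf theta (xs i)))
  / #|[set S : {set 'I_n} | #|S| == b]|%:R.

From HB Require Import structures.
From mathcomp Require Import all_boot all_order all_algebra perm.
From mathcomp Require Import all_classical all_reals all_analysis.
From mathcomp Require Import ring lra.
Import Order.TTheory GRing.Theory Num.Theory.
Import numFieldNormedType.Exports.
Local Open Scope ring_scope.

(* Write the minibatch step as [theta - eta (g + r_S)], where [g] is the mean
   gradient over the whole sample and [r_S] the deviation of the batch mean.
   Every index lies in equally many batches, so [r_S] averages to zero over
   the [b]-subsets and the cross term disappears:
   [P V = 1 + |theta - theta_* - eta g|^2 + eta^2 E |r_S|^2].
   The gradients at the minimiser sum to zero, so (A2) and (A1) give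
   [|theta - theta_* - eta g|^2 <= (1 - 2 eta mu + eta^2 K1^2) |theta - theta_*|^2],
   while (A1) at equal parameters bounds [|r_S|] by [2 D K2 (2 |theta| + 1)].
   The step-size condition reduces what is left to a sum of squares. *)

Section EuclideanNorm.
Context {R : realType} {d : nat}.
Implicit Types (u v w : 'rV[R]_d) (a : R).

Lemma dotvC u v : dotv u v = dotv v u.
Proof. by apply: eq_bigr => i _; rewrite mulrC. Qed.

Lemma dotvDl u v w : dotv (u + v) w = dotv u w + dotv v w.
Proof. by rewrite /dotv -big_split; apply: eq_bigr => i _; rewrite mxE mulrDl. Qed.

Lemma dotvZl a u v : dotv (a *: u) v = a * dotv u v.
Proof. by rewrite /dotv mulr_sumr; apply: eq_bigr => i _; rewrite mxE mulrA. Qed.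

Lemma dotv0l v : dotv 0 v = 0.
Proof. by rewrite -(scale0r 0) dotvZl mul0r. Qed.

Lemma dotvBl u v w : dotv (u - v) w = dotv u w - dotv v w.
Proof. by rewrite dotvDl -scaleN1r dotvZl mulN1r. Qed.

Lemma dotvDr u v w : dotv w (u + v) = dotv w u + dotv w v.
Proof. by rewrite dotvC dotvDl !(dotvC w). Qed.

Lemma dotvZr a u v : dotv v (a *: u) = a * dotv v u.
Proof. by rewrite dotvC dotvZl dotvC. Qed.

Lemma dotvBr u v w : dotv w (u - v) = dotv w u - dotv w v.
Proof. by rewrite dotvC dotvBl !(dotvC w). Qed.

Lemma dotv_suml (I : finType) (P : pred I) (F : I -> 'rV[R]_d) v :
  dotv (\sum_(i | P i) F i) v = \sum_(i | P i) dotv (F i) v.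
Proof. exact: (big_morph (fun u => dotv u v) (fun u w => dotvDl u w v) (dotv0l v)). Qed.

Lemma dotvv_ge0 u : 0 <= dotv u u.
Proof. by apply: sumr_ge0 => i _; rewrite -expr2 sqr_ge0. Qed.

Lemma dotvv_eq0 u : dotv u u = 0 -> u = 0.
Proof.
move=> /eqP; rewrite psumr_eq0 => [/allP u0|i _]; last by rewrite -expr2 sqr_ge0.
apply/rowP => i; rewrite mxE; apply/eqP.
by have := u0 i (mem_index_enum _); rewrite /= -expr2 sqrf_eq0.
Qed.

Lemma enorm_ge0 u : 0 <= enorm u.
Proof. exact: sqrtr_ge0. Qed.

Lemma sqr_enorm u : enorm u ^+ 2 = dotv u u.
Proof. by rewrite sqr_sqrtr // dotvv_ge0. Qed.

Lemma enorm0 : enorm (0 : 'rV[R]_d) = 0.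
Proof. by rewrite /enorm dotv0l sqrtr0. Qed.

Lemma enormZ a u : enorm (a *: u) = `|a| * enorm u.
Proof. by rewrite /enorm dotvZl dotvZr mulrA -expr2 sqrtrM ?sqr_ge0 // sqrtr_sqr. Qed.

Lemma enormN u : enorm (- u) = enorm u.
Proof. by rewrite -scaleN1r enormZ normrN1 mul1r. Qed.

Lemma sqr_enormB u v :
  enorm (u - v) ^+ 2 = enorm u ^+ 2 - 2 * dotv u v + enorm v ^+ 2.
Proof. by rewrite !sqr_enorm !dotvBl !dotvBr (dotvC v u); ring. Qed.

Lemma cauchy_schwarz u v : dotv u v ^+ 2 <= dotv u u * dotv v v.
Proof.
have [/dotvv_eq0 ->|v0] := eqVneq (dotv v v) 0.
  by rewrite dotvC !dotv0l expr0n /= mulr0.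
have vv_gt0 : 0 < dotv v v by rewrite lt_def v0 dotvv_ge0.
set t := dotv u v / dotv v v.
have := dotvv_ge0 (u - t *: v).
rewrite !dotvBl !dotvBr !dotvZl !dotvZr (dotvC v u) => h.
have -> : dotv u u * dotv v v =
    (dotv u u - t * dotv u v - (t * dotv u v - t * (t * dotv v v))) * dotv v v
    + dotv u v ^+ 2.
  by rewrite /t; field.
by rewrite -subr_ge0 addrK mulr_ge0 // ltW.
Qed.

Lemma dotv_le_enorm u v : dotv u v <= enorm u * enorm v.
Proof.
rewrite -sqrtrM ?dotvv_ge0 // (le_trans (ler_norm _)) //.
by rewrite -sqrtr_sqr ler_sqrt ?cauchy_schwarz // mulr_ge0 ?dotvv_ge0.
Qed.

Lemma ler_enormD u v : enorm (u + v) <= enorm u + enorm v.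
Proof.
rewrite -(ler_pXn2r (n := 2)) // ?nnegrE ?addr_ge0 ?enorm_ge0 //.
rewrite sqr_enorm dotvDl !dotvDr (dotvC v u) -!sqr_enorm.
by have := dotv_le_enorm u v; nra.
Qed.

Lemma ler_enorm_sum (I : finType) (P : pred I) (F : I -> 'rV[R]_d) :
  enorm (\sum_(i | P i) F i) <= \sum_(i | P i) enorm (F i).
Proof.
elim/big_rec2: _ => [|i y1 y2 _ ih]; first by rewrite enorm0.
exact: le_trans (ler_enormD _ _) (lerD (lexx _) ih).
Qed.

End EuclideanNorm.

Section Mean.
Context {R : realType} {d : nat} {I : finType}.
Implicit Types (A B : {set I}) (v w : I -> 'rV[R]_d).

Definition vmean A v : 'rV[R]_d := #|A|%:R^-1 *: \sum_(i in A) v i.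

Lemma vmeanT v : vmean [set: I] v = #|I|%:R^-1 *: \sum_i v i.
Proof. by rewrite /vmean cardsT; congr (_ *: _); apply: eq_bigl => i; rewrite inE. Qed.

Lemma vmeanB A v w : vmean A (fun i => v i - w i) = vmean A v - vmean A w.
Proof. by rewrite /vmean sumrB scalerBr. Qed.

Lemma vmean_cst A (c : 'rV[R]_d) : (0 < #|A|)%N -> vmean A (fun=> c) = c.
Proof.
move=> A0; rewrite /vmean sumr_const -[c *+ _]scaler_nat scalerA.
by rewrite mulVf ?scale1r // pnatr_eq0 -lt0n.
Qed.

Lemma enorm_vmean_le A v M :
  (0 < #|A|)%N -> (forall i, i \in A -> enorm (v i) <= M) -> enorm (vmean A v) <= M.
Proof.
move=> A0 vM; rewrite enormZ ger0_norm ?invr_ge0 // mulrC ler_pdivrMr ?ltr0n //.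
apply: le_trans (ler_enorm_sum _ _ _) _.
by rewrite (le_trans (ler_sum _ vM)) // sumr_const mulr_natr.
Qed.

Lemma vmean_dotv_ge A v u c :
  (0 < #|A|)%N -> (forall i, i \in A -> c <= dotv (v i) u) -> c <= dotv (vmean A v) u.
Proof.
move=> A0 vc; rewrite dotvZl dotv_suml ler_pdivlMl ?ltr0n //.
by rewrite (le_trans _ (ler_sum _ vc)) // sumr_const mulr_natl.
Qed.

Lemma enorm_vmeanB_le A B v rho :
  (0 < #|A|)%N -> (0 < #|B|)%N ->
  (forall i j, i \in A -> j \in B -> enorm (v i - v j) <= rho) ->
  enorm (vmean A v - vmean B v) <= rho.
Proof.
move=> A0 B0 vrho.
have -> : vmean A v - vmean B v = vmean A (fun i => vmean B (fun j => v i - v j)).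
  rewrite -[vmean B v](vmean_cst A _ A0) -vmeanB; congr vmean; apply/funext => i.
  by rewrite vmeanB vmean_cst.
by apply: enorm_vmean_le => // i iA; apply: enorm_vmean_le => // j jB; apply: vrho.
Qed.

End Mean.

Section Draws.
Context {I : finType}.
Local Notation draws k := [set S : {set I} | #|S| == k].

(* Transpositions show that every element lies in equally many [k]-subsets;
   then double count the pairs [(i, S)] with [i \in S]. *)
Lemma sum_draws_mem k (i : I) :
  (#|I| * \sum_(S : {set I} | #|S| == k) (i \in S) = k * #|draws k|)%N.
Proof.
pose c j := (\sum_(S : {set I} | #|S| == k) (j \in S))%N.
have c_card j : c j = #|[set S : {set I} | (#|S| == k) && (j \in S)]|.
  by rewrite -sum1dep_card big_mkcondr; apply: eq_bigr => S _; case: (j \in S).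
have c_le j l : (c j <= c l)%N.
  rewrite !c_card -(card_imset _ (imset_inj (@perm_inj _ (tperm j l)))).
  apply: subset_leq_card; apply/fintype.subsetP => _ /imsetP [S + ->].
  rewrite !inE => /andP [Sk jS].
  by rewrite card_imset ?Sk; [rewrite -{1}(tpermL j l) imset_f | exact: perm_inj].
have c_const j : c j = c i by apply/eqP; rewrite eqn_leq !c_le.
transitivity (\sum_(j : I) c j)%N.
  by rewrite (eq_bigr (fun=> c i)) ?sum_nat_const // => j _; rewrite c_const.
rewrite exchange_big /= -sum1dep_card big_distrr /=.
apply: eq_bigr => S /eqP <-; rewrite muln1 -sum1_card [RHS]big_mkcond /=.
by apply: eq_bigr => j _; case: (j \in S).
Qed.

Lemma sum_draws_vmean (R : realType) (d k : nat) (v : I -> 'rV[R]_d) : (0 < k)%N ->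
  \sum_(S : {set I} | #|S| == k) vmean S v = #|draws k|%:R *: vmean [set: I] v.
Proof.
move=> k0; have [I0|I0] := posnP #|I|.
  rewrite card_draws I0 bin0n eqn0Ngt k0 scale0r big_pred0 // => S.
  by apply/negbTE; rewrite neq_ltn (leq_ltn_trans (max_card S)) ?I0.
transitivity (\sum_(S : {set I} | #|S| == k) k%:R^-1 *: \sum_i (i \in S)%:R *: v i).
  apply: eq_bigr => S /eqP <-; congr (_ *: _); rewrite big_mkcond /=.
  by apply: eq_bigr => i _; case: (i \in S); rewrite ?scale1r ?scale0r.
rewrite -scaler_sumr exchange_big vmeanT scalerA !scaler_sumr; apply: eq_bigr => i _.
rewrite -scaler_suml scalerA -natr_sum mulrC; congr (_ *: _).
apply/eqP; rewrite eqr_div ?pnatr_eq0 -?lt0n // -!natrM eqr_nat.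
by rewrite mulnC sum_draws_mem mulnC.
Qed.

End Draws.

Section Step.
Context {R : realType} {d : nat}.

Lemma sum_sqr_enormB_centered (J : finType) (P : pred J) (a : 'rV[R]_d)
    (r : J -> 'rV[R]_d) :
  \sum_(j | P j) r j = 0 ->
  \sum_(j | P j) enorm (a - r j) ^+ 2 = \sum_(j | P j) (enorm a ^+ 2 + enorm (r j) ^+ 2).
Proof.
move=> r0; have cross : \sum_(j | P j) 2 * dotv a (r j) = 0.
  rewrite -mulr_sumr; under eq_bigr do rewrite dotvC.
  by rewrite -dotv_suml r0 dotv0l mulr0.
under eq_bigr do rewrite sqr_enormB.
by rewrite big_split /= sumrB cross subr0 -big_split.
Qed.

Lemma sqr_enorm_step_le {u g : 'rV[R]_d} {eta mu K : R} :
  0 <= eta -> mu * enorm u ^+ 2 <= dotv g u -> enorm g <= K * enorm u ->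
  enorm (u - eta *: g) ^+ 2 <= (1 - 2 * eta * mu + eta ^+ 2 * K ^+ 2) * enorm u ^+ 2.
Proof.
move=> eta0 gu gK; rewrite sqr_enormB dotvZr enormZ ger0_norm // (dotvC u g).
have g0 := enorm_ge0 g.
have g2 : enorm g ^+ 2 <= K ^+ 2 * enorm u ^+ 2 by nra.
have e1 : eta * (mu * enorm u ^+ 2) <= eta * dotv g u by rewrite ler_wpM2l.
have e2 : eta ^+ 2 * enorm g ^+ 2 <= eta ^+ 2 * (K ^+ 2 * enorm u ^+ 2).
  by rewrite ler_wpM2l // sqr_ge0.
rewrite exprMn; lra.
Qed.

End Step.

Section MinibatchKernel.
Context {R : realType} {d m n b : nat}.
Context {gradf : 'rV[R]_d -> 'rV[R]_m -> 'rV[R]_d} {xs : 'I_n -> 'rV[R]_m}.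
Context {eta : R} {thstar theta : 'rV[R]_d}.
Let G i := gradf theta (xs i).

Lemma PV_Vhat_le rho : (0 < b <= n)%N ->
  (forall S : {set 'I_n}, #|S| = b -> enorm (vmean S G - vmean [set: 'I_n] G) <= rho) ->
  @PV R d m n b gradf xs eta (Vhat thstar) theta <=
    1 + enorm (theta - thstar - eta *: vmean [set: 'I_n] G) ^+ 2 + eta ^+ 2 * rho ^+ 2.
Proof.
move=> /andP [b0 bn] rhoS.
set N := #|[set S : {set 'I_n} | #|S| == b]|.
have N0 : (0 < N)%N by rewrite /N card_draws card_ord bin_gt0.
set a := theta - thstar - eta *: vmean [set: 'I_n] G.
pose r S := eta *: (vmean S G - vmean [set: 'I_n] G).
have r0 : \sum_(S : {set 'I_n} | #|S| == b) r S = 0.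
  rewrite -scaler_sumr sumrB sum_draws_vmean // sumr_const cardsE scaler_nat.
  by rewrite subrr scaler0.
have Vr (S : {set 'I_n}) : #|S| == b ->
    Vhat thstar (theta - (eta / b%:R) *: \sum_(i in S) G i) = 1 + enorm (a - r S) ^+ 2.
  move=> /eqP Sb; rewrite /Vhat /a /r /vmean Sb scalerBr opprB addrA subrK scalerA.
  by rewrite addrAC.
rewrite /PV ler_pdivrMr ?ltr0n // (eq_bigr _ Vr) big_split /= sum_sqr_enormB_centered //.
have -> : (1 + enorm a ^+ 2 + eta ^+ 2 * rho ^+ 2) * N%:R =
    \sum_(S : {set 'I_n} | #|S| == b) (1 + enorm a ^+ 2 + eta ^+ 2 * rho ^+ 2).
  by rewrite sumr_const /N cardsE mulr_natr.
rewrite -big_split /=.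
apply: ler_sum => S /eqP Sb; rewrite addrA lerD2l /r enormZ exprMn -normrX.
rewrite ger0_norm ?sqr_ge0 // ler_wpM2l ?sqr_ge0 //.
have := rhoS S Sb; have := enorm_ge0 (vmean S G - vmean [set: 'I_n] G); nra.
Qed.

End MinibatchKernel.

Section Line.
Context {R : realType} {V : normedModType R}.

Let line_quotient (F : V -> R) (a v : V) (t : R) :
  (fun h : R => h^-1 *: (((fun s => F (s *: v + a)) \o shift t) (h *: 1)
                          - F (t *: v + a)))
  = (fun h : R => h^-1 *: ((F \o shift (t *: v + a)) (h *: v) - F (t *: v + a))).
Proof. by apply/funext => h /=; rewrite [h *: 1]mulr1 scalerDl addrA. Qed.

Lemma derive_line (F : V -> R) (a v : V) (t : R) :
  'D_1 (fun s : R => F (s *: v + a)) t = 'D_v F (t *: v + a).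
Proof. by rewrite /derive line_quotient. Qed.

Lemma derivable_line (F : V -> R) (a v : V) (t : R) :
  derivable (fun s : R => F (s *: v + a)) t 1 = derivable F (t *: v + a) v.
Proof. by rewrite /derivable line_quotient. Qed.

Lemma derive_at_min (F : V -> R) (a v : V) :
  (forall x, derivable F x v) -> (forall y, F a <= F y) -> 'D_v F a = 0.
Proof.
move=> dF Fmin; have := derive_line F a v 0; rewrite scale0r add0r => <-.
apply: derive_val; apply: (@derive1_at_min _ _ (-1) 1) => [|t _||t _].
- lra.
- by rewrite derivable_line.
- by rewrite in_itv /= ltrN10 ltr01.
- by rewrite scale0r add0r Fmin.
Qed.

End Line.

Lemma sum_gradf_eq0_at_min {R : realType} {d m n : nat} {X : set 'rV[R]_m}
    {f : 'rV[R]_d -> 'rV[R]_m -> R} {gradf : 'rV[R]_d -> 'rV[R]_m -> 'rV[R]_d}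
    {xs : 'I_n -> 'rV[R]_m} {thstar : 'rV[R]_d} :
  (forall x theta, X x -> differentiable (fun t => f t x) theta) ->
  (forall x theta v, X x -> 'D_v (fun t => f t x) theta = dotv (gradf theta x) v) ->
  (forall i, X (xs i)) -> (0 < n)%N ->
  (forall theta, Fhat f xs thstar <= Fhat f xs theta) ->
  \sum_i gradf thstar (xs i) = 0.
Proof.
move=> fdiff fD xsX n0 Fmin; set g := \sum_i gradf thstar (xs i).
have fdrv i theta : derivable (fun t => f t (xs i)) theta g.
  exact/diff_derivable/fdiff.
have : 'D_g (\sum_i (fun t => f t (xs i))) thstar = 0.
  apply: derive_at_min => [theta|theta]; first exact: derivable_sum.
  by rewrite !fct_sumE; have := Fmin theta; rewrite /Fhat ler_pM2l ?invr_gt0 ?ltr0n.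
rewrite derive_sum // => gg0; apply: dotvv_eq0; rewrite -[RHS]gg0 {1}/g dotv_suml.
by apply: eq_bigr => i _; rewrite fD.
Qed.

Section Gradients.
Context {R : realType} {d m : nat} {X : set 'rV[R]_m} {D K1 K2 mu : R}.
Context {gradf : 'rV[R]_d -> 'rV[R]_m -> 'rV[R]_d}.
Hypothesis XD : forall x, X x -> enorm x <= D.
Hypothesis K2_ge0 : 0 <= K2.
Hypothesis gradf_lip : forall th th' x x', X x -> X x' ->
  enorm (gradf th x - gradf th' x') <=
    K1 * enorm (th - th') + K2 * enorm (x - x') * (enorm th + enorm th' + 1).
Hypothesis gradf_mono : forall th1 th2 x, X x ->
  mu * enorm (th1 - th2) ^+ 2 <= dotv (gradf th1 x - gradf th2 x) (th1 - th2).

Lemma enorm_gradfB_data_le th x x' : X x -> X x' ->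
  enorm (gradf th x - gradf th x') <= 2 * D * K2 * (2 * enorm th + 1).
Proof.
move=> Xx Xx'; apply: le_trans (gradf_lip th th x x' Xx Xx') _.
rewrite subrr enorm0 mulr0 add0r.
have xx'_le : enorm (x - x') <= 2 * D.
  apply: le_trans (ler_enormD _ _) _; rewrite enormN.
  by have := XD x Xx; have := XD x' Xx'; lra.
have : 0 <= K2 * (2 * D - enorm (x - x')) by rewrite mulr_ge0 // subr_ge0.
by have := enorm_ge0 th; nra.
Qed.

Lemma enorm_gradfB_le th th' x : X x ->
  enorm (gradf th x - gradf th' x) <= K1 * enorm (th - th').
Proof.
move=> Xx; have := gradf_lip th th' x x Xx Xx.
by rewrite subrr enorm0 mulr0 mul0r addr0.
Qed.

Context {n : nat} {xs : 'I_n -> 'rV[R]_m} {thstar : 'rV[R]_d}.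
Hypothesis xsX : forall i, X (xs i).
Hypothesis sum_gradf_thstar : \sum_i gradf thstar (xs i) = 0.
Hypothesis n_gt0 : (0 < n)%N.

Let vmean_gradfE theta : vmean [set: 'I_n] (fun i => gradf theta (xs i)) =
  vmean [set: 'I_n] (fun i => gradf theta (xs i) - gradf thstar (xs i)).
Proof. by rewrite vmeanB [X in _ - X]vmeanT sum_gradf_thstar scaler0 subr0. Qed.

Let card_setT_gt0 : (0 < #|[set: 'I_n]|)%N.
Proof. by rewrite cardsT card_ord. Qed.

Lemma vmean_gradf_mono theta :
  mu * enorm (theta - thstar) ^+ 2 <=
    dotv (vmean [set: 'I_n] (fun i => gradf theta (xs i))) (theta - thstar).
Proof. by rewrite vmean_gradfE; apply: vmean_dotv_ge => // i _; exact: gradf_mono. Qed.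

Lemma enorm_vmean_gradf_le theta :
  enorm (vmean [set: 'I_n] (fun i => gradf theta (xs i))) <= K1 * enorm (theta - thstar).
Proof.
by rewrite vmean_gradfE; apply: enorm_vmean_le => // i _; exact: enorm_gradfB_le.
Qed.

End Gradients.

Lemma lyapunov_drift_arith {R : realFieldType} {eta mu K1 D K2 s t r : R} :
  0 <= eta -> eta * (K1 ^+ 2 + 64 * D ^+ 2 * K2 ^+ 2) <= mu ->
  0 <= s -> 0 <= t -> 0 <= r -> r <= s + t ->
  1 + (1 - 2 * eta * mu + eta ^+ 2 * K1 ^+ 2) * s ^+ 2
    + eta ^+ 2 * (2 * D * K2 * (2 * r + 1)) ^+ 2 <=
  (1 - eta * mu) * (1 + s ^+ 2) + 2 * eta * mu - eta ^+ 2 * K1 ^+ 2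
    - 56 * eta ^+ 2 * D ^+ 2 * K2 ^+ 2 + 64 * eta ^+ 2 * D ^+ 2 * K2 ^+ 2 * t ^+ 2.
Proof.
move=> eta0 eta_mu s0 t0 r0 rst.
have k1 : 0 <= eta * (1 + s ^+ 2) * (mu - eta * (K1 ^+ 2 + 64 * D ^+ 2 * K2 ^+ 2)).
  by rewrite mulr_ge0 ?subr_ge0 // mulr_ge0 // addr_ge0 ?sqr_ge0.
(* Once [k1] absorbs the [eta mu] terms, the remaining difference is
   [2 eta^2 D^2 K2^2 (8 (s - t)^2 + (4 s - 1)^2 + (4 t - 1)^2)]. *)
have k2 : 0 <= eta ^+ 2 * (D ^+ 2 * K2 ^+ 2) *
    (8 * (s - t) ^+ 2 + (4 * s - 1) ^+ 2 + (4 * t - 1) ^+ 2).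
  apply: mulr_ge0; first by rewrite mulr_ge0 ?sqr_ge0 // mulr_ge0 ?sqr_ge0.
  have := sqr_ge0 (s - t); have := sqr_ge0 (4 * s - 1).
  by have := sqr_ge0 (4 * t - 1); lra.
have k3 : 0 <= eta ^+ 2 * (D ^+ 2 * K2 ^+ 2) *
    ((2 * (s + t) + 1) ^+ 2 - (2 * r + 1) ^+ 2).
  apply: mulr_ge0; first by rewrite mulr_ge0 ?sqr_ge0 // mulr_ge0 ?sqr_ge0.
  rewrite subr_ge0 ler_pXn2r // ?nnegrE; lra.
rewrite !exprMn; lra.
Qed.

Local Open Scope classical_set_scope.

Theorem lemmaC2 (R : realType) (d m : nat)
  (X : set 'rV[R]_m) (D : R)
  (f : 'rV[R]_d -> 'rV[R]_m -> R) (gradf : 'rV[R]_d -> 'rV[R]_m -> 'rV[R]_d)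
  (K1 K2 mu : R) (n b : nat) (xs : 'I_n -> 'rV[R]_m)
  (thstar : 'rV[R]_d) (eta : R) :
  (forall x, X x -> enorm x <= D) ->
  (* f differentiable in theta, with gradient gradf *)
  (forall x theta, X x -> differentiable (fun t => f t x) theta) ->
  (forall x theta v, X x -> 'D_v (fun t => f t x) theta = dotv (gradf theta x) v) ->
  (* (A1) *)
  0 < K1 -> 0 < K2 ->
  (forall th th' x x', X x -> X x' ->
     enorm (gradf th x - gradf th' x') <=
       K1 * enorm (th - th') + K2 * enorm (x - x') * (enorm th + enorm th' + 1)) ->
  (* (A2) *)
  0 < mu ->
  (forall th1 th2 x, X x ->
     dotv (gradf th1 x - gradf th2 x) (th1 - th2) >= mu * enorm (th1 - th2) ^+ 2) ->
  (* data, batch size, minimizer *)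
  (forall i, X (xs i)) ->
  (0 < b <= n)%N ->
  (forall theta, Fhat f xs thstar <= Fhat f xs theta) ->
  (* step size *)
  0 < eta -> eta < Num.min (mu^-1) (mu / (K1 ^+ 2 + 64 * D ^+ 2 * K2 ^+ 2)) ->
  forall theta : 'rV[R]_d,
    @PV R d m n b gradf xs eta (Vhat thstar) theta <=
      (1 - eta * mu) * Vhat thstar theta + 2 * eta * mu - eta ^+ 2 * K1 ^+ 2
      - 56 * eta ^+ 2 * D ^+ 2 * K2 ^+ 2
      + 64 * eta ^+ 2 * D ^+ 2 * K2 ^+ 2 * enorm thstar ^+ 2.
Proof.
move=> XD fdiff fD K1_gt0 K2_gt0 lip mu_gt0 mono xsX bn Fmin eta_gt0 eta_lt theta.
have n_gt0 : (0 < n)%N by case/andP: bn; exact: leq_trans.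
have opt := sum_gradf_eq0_at_min fdiff fD xsX n_gt0 Fmin.
have eta_mu : eta * (K1 ^+ 2 + 64 * D ^+ 2 * K2 ^+ 2) <= mu.
  move: eta_lt; rewrite lt_min => /andP [_]; rewrite ltr_pdivlMr => [/ltW //|].
  have : 0 <= D ^+ 2 * K2 ^+ 2 by rewrite mulr_ge0 ?sqr_ge0.
  by have := exprn_gt0 2 K1_gt0; lra.
have theta_le : enorm theta <= enorm (theta - thstar) + enorm thstar.
  by rewrite -{1}(subrK thstar theta) ler_enormD.
apply: le_trans (PV_Vhat_le (2 * D * K2 * (2 * enorm theta + 1)) bn _) _.
  move=> S Sb; apply: enorm_vmeanB_le; rewrite ?Sb ?cardsT ?card_ord //.
    by case/andP: bn.
  move=> i j _ _.
  exact: enorm_gradfB_data_le XD (ltW K2_gt0) lip _ _ _ (xsX i) (xsX j).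
have := sqr_enorm_step_le (ltW eta_gt0) (vmean_gradf_mono mono xsX opt n_gt0 theta)
  (enorm_vmean_gradf_le lip xsX opt n_gt0 theta).
have := lyapunov_drift_arith (ltW eta_gt0) eta_mu (enorm_ge0 (theta - thstar))
  (enorm_ge0 thstar) (enorm_ge0 theta) theta_le.
rewrite /Vhat; lra.
Qed.
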